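(* Consider a two-user ($N=2$) multi-hop decode-and-forward relay network with $L\ge 2$ hops and a fixed relay assignment, with powers, SINRs and sum-rate as defined in the context. Then there exists a power allocation $\mathbf{P}^*\in[0,P]^{2L}$ maximizing the sum-rate $R(\mathbf{P})$ over $[0,P]^{2L}$ such that (i) at least two of the $2L$ transmit powers $P^*_{i,l}$ are binary, i.e., belong to $\{0,P\}$, and (ii) the remaining transmit powers are determined by SINR matching, i.e., by the equalities $\gamma_{i,1}(\mathbf{P}^* )=\gamma_{i,l}(\mathbf{P}^* )$ for all $i\in\{1,2\}$ and all $l\in\{2,\dots,L\}$.
   Context: Setup: there are two source–destination (S-D) pairs (users) $i\in\{1,2\}$, whose information travels over $L$ hops. For a fixed relay assignment, user $i$ uses a path of nodes $r_{i,0},r_{i,1},\dots,r_{i,L}$ (source $r_{i,0}$, destination $r_{i,L}$, distinct relays of the two users in each intermediate hop). In hop $l\in\{1,\dots,L\}$ the two transmitting nodes $r_{1,l-1},r_{2,l-1}$ transmit simultaneously with powers $P_{1,l-1},P_{2,l-1}\in[0,P]$, where $P>0$ is the maximum transmit power. Let $g_{j,i,l}=|h[r_{j,l-1},r_{i,l},l]|^2>0$ denote the channel power gain from the transmitter of user $j$ to the receiver of user $i$ in hop $l$, and let $\sigma^2>0$ be the noise variance. The SINR of user $i$ in hop $l$ (interference treated as noise, $j\neq i$ the other user) is $\gamma_{i,l}(\mathbf{P})=\dfrac{P_{i,l-1}\,g_{i,i,l}}{\sigma^2+P_{j,l-1}\,g_{j,i,l}}$. The end-to-end SINR of user $i$ is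 $\min_{l\in\{1,\dots,L\}}\gamma_{i,l}$ and the sum-rate is $R(\mathbf{P})=\sum_{i=1}^{2}\log_2(1+\min_{l}\gamma_{i,l}(\mathbf{P}))$. SINR matching means choosing the powers along each user's path so that the SINRs of that user at all receiving nodes of its path are equal. *)

From Stdlib Require Import Reals List.
Import ListNotations.
Open Scope R_scope.

(* Users are indexed by i in {1,2}; hops by l in {1,...,L}.
   A power allocation is p : nat -> nat -> R, where p i k is P_{i,k}
   (the transmit power of node r_{i,k}), k in {0,...,L-1}.
   Channel power gains: g j i l = g_{j,i,l} = |h[r_{j,l-1}, r_{i,l}, l]|^2
   (from transmitter of user j to receiver of user i in hop l). *)

Definition is_user (i : nat) : Prop := i = 1%nat \/ i = 2%nat.

Definition other (i : nat) : nat := if Nat.eqb i 1 then 2%nat else 1%nat.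

Definition sinr (g : nat -> nat -> nat -> R) (sigma2 : R)
  (p : nat -> nat -> R) (i l : nat) : R :=
  p i (l - 1)%nat * g i i l / (sigma2 + p (other i) (l - 1)%nat * g (other i) i l).

Definition min_hops (f : nat -> R) (L : nat) : R :=
  fold_right Rmin (f 1%nat) (map f (seq 1 L)).

Definition log2 (x : R) : R := ln x / ln 2.

Definition sum_rate (L : nat) (g : nat -> nat -> nat -> R) (sigma2 : R)
  (p : nat -> nat -> R) : R :=
  log2 (1 + min_hops (sinr g sigma2 p 1) L)
  + log2 (1 + min_hops (sinr g sigma2 p 2) L).

Definition feasible (L : nat) (Pmax : R) (p : nat -> nat -> R) : Prop :=
  forall i k, is_user i -> (k < L)%nat -> 0 <= p i k <= Pmax.

(* Every admissible allocation has end-to-end SINRs (X, Y) in the region cut out at each hop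
   by [hop_admissible] and its mirror image; conversely every (X, Y) of that region is reached,
   with the same SINR at every hop, by the closed-form matched powers.  The sum rate is the
   logarithm of (1 + X)(1 + Y), so it suffices to maximize this product over the region, which
   is compact.  At a maximizer with X, Y > 0 two of the 2L hop constraints are tight: if none
   were, Y could be increased; if only one were, then along its hyperbola X (u + w Y) = z the
   product (1 + X)(1 + Y) is strictly convex, so one direction improves it.  A tight constraint
   makes the matched power equal to P, and X = 0 makes every power of user 1 vanish. *)

From Stdlib Require Import Reals Lra Lia List Classical.
From Coquelicot Require Import Rcomplements Hierarchy Continuity.
Open Scope R_scope.

Lemma min_hops_le f L l : (1 <= l <= L)%nat -> min_hops f L <= f l.
Proof.
  intros Hl; unfold min_hops.
  assert (Hin : In l (seq 1 L)) by (apply in_seq; lia).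
  induction (seq 1 L) as [|l' s IH]; [destruct Hin|].
  destruct Hin as [-> | Hin]; simpl; [apply Rmin_l|].
  eapply Rle_trans; [apply Rmin_r | auto].
Qed.

Lemma min_hops_ind (Q : R -> Prop) f L :
  (1 <= L)%nat -> (forall a b, Q a -> Q b -> Q (Rmin a b)) ->
  (forall l, (1 <= l <= L)%nat -> Q (f l)) -> Q (min_hops f L).
Proof.
  intros HL Hmin Hf; unfold min_hops.
  assert (Hs : forall l, In l (seq 1 L) -> Q (f l))
    by (intros l Hl; apply in_seq in Hl; apply Hf; lia).
  induction (seq 1 L) as [|l s IH]; simpl; [apply Hf; lia|].
  apply Hmin; [apply Hs; left | apply IH; intros; apply Hs; right]; auto.
Qed.

Lemma min_hops_glb f L c :
  (1 <= L)%nat -> (forall l, (1 <= l <= L)%nat -> c <= f l) -> c <= min_hops f L.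
Proof. intros HL; apply min_hops_ind; auto using Rmin_glb. Qed.

Lemma min_hops_pos f L :
  (1 <= L)%nat -> (forall l, (1 <= l <= L)%nat -> 0 < f l) -> 0 < min_hops f L.
Proof. intros HL; apply min_hops_ind; auto using Rmin_glb_lt. Qed.

Lemma min_hops_const f L c :
  (1 <= L)%nat -> (forall l, (1 <= l <= L)%nat -> f l = c) -> min_hops f L = c.
Proof.
  intros HL Hf; apply min_hops_ind; auto.
  intros a b -> ->; apply Rmin_left; lra.
Qed.

Lemma continuity_pt_Rmin f g x :
  continuity_pt f x -> continuity_pt g x -> continuity_pt (fun y => Rmin (f y) (g y)) x.
Proof.
  intros Hf Hg.
  apply continuity_pt_ext with (fun y => (f y + g y - Rabs (f y - g y)) / 2).
  { intros y; unfold Rmin, Rabs; destruct (Rle_dec (f y) (g y)), (Rcase_abs (f y - g y)); lra. }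
  apply continuity_pt_div; [| apply continuity_pt_const; intros ? ?; reflexivity | lra].
  apply continuity_pt_minus; [now apply continuity_pt_plus|].
  apply (continuity_pt_comp (fun y => f y - g y) Rabs);
    [now apply continuity_pt_minus | apply Rcontinuity_abs].
Qed.

Lemma continuity_pt_Rmax f g x :
  continuity_pt f x -> continuity_pt g x -> continuity_pt (fun y => Rmax (f y) (g y)) x.
Proof.
  intros Hf Hg.
  apply continuity_pt_ext with (fun y => f y + g y - Rmin (f y) (g y)).
  { intros y; unfold Rmin, Rmax; destruct (Rle_dec (f y) (g y)); lra. }
  apply continuity_pt_minus; [apply continuity_pt_plus | apply continuity_pt_Rmin]; auto.
Qed.

Lemma continuity_pt_min_hops (h : nat -> R -> R) L x :
  (1 <= L)%nat -> (forall l, (1 <= l <= L)%nat -> continuity_pt (h l) x) ->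
  continuity_pt (fun y => min_hops (fun l => h l y) L) x.
Proof.
  intros HL Hh; unfold min_hops.
  assert (Hs : forall l, In l (seq 1 L) -> continuity_pt (h l) x)
    by (intros l Hl; apply in_seq in Hl; apply Hh; lia).
  induction (seq 1 L) as [|l s IH]; simpl; [apply Hh; lia|].
  apply continuity_pt_Rmin; [apply Hs; left | apply IH; intros; apply Hs; right]; auto.
Qed.

Lemma locally_forall_hops (P : nat -> R -> Prop) L x :
  (forall l, (1 <= l <= L)%nat -> locally x (P l)) ->
  locally x (fun t => forall l, (1 <= l <= L)%nat -> P l t).
Proof.
  induction L as [|L IH]; intros HP.
  - apply filter_forall; intros t l Hl; lia.
  - apply (filter_imp (fun t => (forall l, (1 <= l <= L)%nat -> P l t) /\ P (S L) t)).
    + intros t [Ht HSL] l Hl.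
      destruct (Nat.eq_dec l (S L)) as [-> | Hne]; [auto | apply Ht; lia].
    + apply filter_and; [apply IH; intros; apply HP; lia | apply HP; lia].
Qed.

Lemma locally_lt f x z : continuity_pt f x -> f x < z -> locally x (fun t => f t < z).
Proof.
  intros Hf Hz.
  apply (filter_imp (fun t => Rabs (f t - f x) < z - f x)).
  - intros t Ht; apply Rabs_def2 in Ht; lra.
  - apply (proj1 (continuity_pt_locally f x) Hf (mkposreal _ (proj2 (Rlt_0_minus _ _) Hz))).
Qed.

Lemma locally_le_of_lt f x z : continuity_pt f x -> locally x (fun t => f x < z -> f t <= z).
Proof.
  intros Hf; destruct (classic (f x < z)) as [Hz | Hz].
  - apply (filter_imp (fun t => f t < z)); [intros; lra | apply locally_lt; auto].
  - apply filter_forall; tauto.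
Qed.

Lemma locally_pos f x : continuity_pt f x -> 0 < f x -> locally x (fun t => 0 < f t).
Proof.
  intros Hf Hx.
  apply (filter_imp (fun t => - f t < 0)); [intros; lra|].
  apply locally_lt; [apply continuity_pt_opp | lra]; auto.
Qed.

Lemma locally_0_pair (P : R -> Prop) b :
  0 < b -> locally 0 P -> exists t, 0 < t < b /\ P t /\ P (- t).
Proof.
  intros Hb [eps Heps].
  assert (Hball : forall t, Rabs t < eps -> P t).
  { intros t Ht; apply Heps. change (Rabs (t - 0) < eps). rewrite Rminus_0_r; auto. }
  pose proof (cond_pos eps).
  exists (Rmin b eps / 2).
  assert (0 < Rmin b eps) by (apply Rmin_glb_lt; auto).
  pose proof (Rmin_l b eps); pose proof (Rmin_r b eps).
  split; [lra|]; split; apply Hball; [rewrite Rabs_right | rewrite Rabs_left]; lra.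
Qed.

(* Eliminating the powers from [pi gii >= Xi (s + pj gji)], [pj gjj >= Xj (s + pi gij)] and
   [pi <= P]: together with its mirror image this characterizes the SINR pairs a hop can carry. *)
Definition hop_admissible (gii gij gji gjj s P Xi Xj : R) : Prop :=
  Xi * (s * gjj + (s * gji + P * gij * gji) * Xj) <= P * gii * gjj.

(* The solution [pi] of [pi gii = Xi (s + pj gji)], [pj gjj = Xj (s + pi gij)]. *)
Definition matched_power (gii gij gji gjj s Xi Xj : R) : R :=
  Xi * s * (gjj + Xj * gji) / (gii * gjj - Xi * Xj * gij * gji).

Section Hop.
Variables gii gij gji gjj s P : R.
Hypotheses (Hgii : 0 < gii) (Hgij : 0 < gij) (Hgji : 0 < gji) (Hgjj : 0 < gjj)
  (Hs : 0 < s) (HP : 0 < P).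

Lemma hop_admissible_of_sinr pi pj Xi Xj :
  0 <= pi <= P -> 0 <= pj -> 0 <= Xi -> 0 <= Xj ->
  Xi * (s + pj * gji) <= pi * gii -> Xj * (s + pi * gij) <= pj * gjj ->
  hop_admissible gii gij gji gjj s P Xi Xj.
Proof.
  intros Hpi Hpj HXi HXj Hi Hj; unfold hop_admissible.
  set (D := gii * gjj - Xi * Xj * gij * gji).
  assert (Hi' := Rmult_le_compat_l gjj _ _ (Rlt_le _ _ Hgjj) Hi).
  assert (Hj' : Xi * gji * (Xj * (s + pi * gij)) <= Xi * gji * (pj * gjj))
    by (apply Rmult_le_compat_l; nra).
  (* eliminating pj leaves a bound linear in pi *)
  assert (Hpi_D : Xi * s * gjj + Xi * Xj * s * gji <= pi * D) by (unfold D; nra).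
  assert (0 <= Xi * Xj * s * gji) by (repeat apply Rmult_le_pos; lra).
  destruct (Rle_or_lt 0 D) as [HD | HD].
  - assert (pi * D <= P * D) by nra. unfold D in *; nra.
  - destruct (Rle_lt_or_eq_dec 0 Xi HXi) as [HXi0 | <-]; [|unfold D in HD; nra].
    assert (0 < Xi * s * gjj) by (repeat apply Rmult_lt_0_compat; lra).
    nra.
Qed.

Section Matched.
Variables Xi Xj : R.
Hypotheses (HXi : 0 <= Xi) (HXj : 0 <= Xj) (Hadm : hop_admissible gii gij gji gjj s P Xi Xj).

Lemma matched_det_pos : 0 < gii * gjj - Xi * Xj * gij * gji.
Proof.
  unfold hop_admissible in Hadm.
  destruct (Rle_lt_or_eq_dec 0 Xi HXi) as [HXi0 | <-]; [|nra].
  assert (0 < Xi * s * gjj) by (repeat apply Rmult_lt_0_compat; lra).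
  assert (0 <= Xi * Xj * s * gji) by (repeat apply Rmult_le_pos; lra).
  assert (P * (Xi * Xj * gij * gji) < P * (gii * gjj)) by nra.
  apply Rmult_lt_reg_l in H1; lra.
Qed.

Lemma matched_power_sub_P :
  (matched_power gii gij gji gjj s Xi Xj - P) * (gii * gjj - Xi * Xj * gij * gji) =
  Xi * (s * gjj + (s * gji + P * gij * gji) * Xj) - P * gii * gjj.
Proof. pose proof matched_det_pos; unfold matched_power; field; lra. Qed.

Lemma matched_power_range : 0 <= matched_power gii gij gji gjj s Xi Xj <= P.
Proof.
  pose proof matched_det_pos; pose proof matched_power_sub_P.
  unfold hop_admissible in Hadm. split.
  - unfold matched_power; apply Rdiv_le_0_compat; [|lra].
    repeat apply Rmult_le_pos; nra.
  - nra.
Qed.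

Lemma matched_power_tight :
  Xi * (s * gjj + (s * gji + P * gij * gji) * Xj) = P * gii * gjj ->
  matched_power gii gij gji gjj s Xi Xj = P.
Proof.
  intros Htight; pose proof matched_det_pos; pose proof matched_power_sub_P.
  apply (Rmult_eq_reg_r (gii * gjj - Xi * Xj * gij * gji)); [|lra]. nra.
Qed.

Lemma matched_power_sinr :
  matched_power gii gij gji gjj s Xi Xj * gii /
    (s + matched_power gjj gji gij gii s Xj Xi * gji) = Xi.
Proof.
  pose proof matched_det_pos.
  assert (0 <= Xj * s * (gii + Xi * gij) * gji) by (repeat apply Rmult_le_pos; nra).
  assert (0 < s * (gii * gjj - Xi * Xj * gij * gji)) by (apply Rmult_lt_0_compat; lra).
  unfold matched_power.
  replace (gjj * gii - Xj * Xi * gji * gij) with (gii * gjj - Xi * Xj * gij * gji) by ring.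
  field; repeat split; lra.
Qed.

End Matched.
End Hop.

Lemma matched_power_zero gii gij gji gjj s Xj : matched_power gii gij gji gjj s 0 Xj = 0.
Proof. unfold matched_power, Rdiv; ring. Qed.

Definition gain (X Y : R) : R := (1 + X) * (1 + Y).

Lemma gain_hyperbola_convex X Y c t : 0 < c -> 0 < t < X ->
  2 * gain X Y < gain (X + t) (Y - c * t / (X + t)) + gain (X + - t) (Y - c * - t / (X + - t)).
Proof.
  intros Hc Ht.
  assert (E : gain (X + t) (Y - c * t / (X + t)) + gain (X + - t) (Y - c * - t / (X + - t))
              = 2 * gain X Y + 2 * c * t * t / ((X + t) * (X - t)))
    by (unfold gain; field; lra).
  rewrite E; enough (0 < 2 * c * t * t / ((X + t) * (X - t))) by lra.
  apply Rdiv_lt_0_compat; repeat apply Rmult_lt_0_compat; lra.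
Qed.

Lemma log2_sum_le X Y X' Y' : 0 <= X -> 0 <= Y -> 0 <= X' -> 0 <= Y' ->
  gain X Y <= gain X' Y' -> log2 (1 + X) + log2 (1 + Y) <= log2 (1 + X') + log2 (1 + Y').
Proof.
  intros HX HY HX' HY' Hgain; unfold log2, gain in *.
  assert (0 < ln 2) by (pose proof ln_lt_2; lra).
  rewrite <- !Rdiv_plus_distr, <- !ln_mult by lra.
  apply Rmult_le_compat_r; [left; apply Rinv_0_lt_compat; lra | apply ln_le; nra].
Qed.

Lemma le_capped_ratio_iff u w z Ym x0 X Y :
  0 < u -> 0 < w -> 0 < x0 -> x0 * (u + w * Ym) <= z -> 0 <= X -> 0 <= Y <= Ym ->
  X * (u + w * Y) <= z <-> Y <= (z - u * X) / (w * Rmax X x0).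
Proof.
  intros Hu Hw Hx0 Hcap HX [HY HYm].
  rewrite <- Rle_div_r by (apply Rmult_lt_0_compat; [lra | pose proof (Rmax_r X x0); lra]).
  unfold Rmax; destruct (Rle_dec X x0) as [Hle | Hgt]; [|split; intros; nra].
  (* below the cap both inequalities hold outright *)
  assert (X * (u + w * Y) <= x0 * (u + w * Ym)) by (apply Rmult_le_compat; nra).
  assert (Y * (w * x0) <= Ym * (w * x0)) by (apply Rmult_le_compat_r; nra).
  split; intros; nra.
Qed.

Section Region.
Variables (L : nat) (u1 w1 z1 v2 w2 z2 : nat -> R).

Hypothesis coeffs_pos : forall l, (1 <= l <= L)%nat ->
  0 < u1 l /\ 0 < w1 l /\ 0 < z1 l /\ 0 < v2 l /\ 0 < w2 l /\ 0 < z2 l.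

Definition region (X Y : R) : Prop :=
  0 <= X /\ 0 <= Y /\ forall l, (1 <= l <= L)%nat ->
    X * (u1 l + w1 l * Y) <= z1 l /\ Y * (v2 l + w2 l * X) <= z2 l.

Definition region_maximizer (X Y : R) : Prop :=
  region X Y /\ forall X' Y', region X' Y' -> gain X' Y' <= gain X Y.

Definition tight (i l : nat) (X Y : R) : Prop :=
  (i = 1%nat /\ X * (u1 l + w1 l * Y) = z1 l) \/ (i = 2%nat /\ Y * (v2 l + w2 l * X) = z2 l).

Lemma region_along_curve X Y (x y : R -> R) :
  continuity_pt x 0 -> continuity_pt y 0 -> x 0 = X -> y 0 = Y -> 0 < X -> 0 < Y -> region X Y ->
  (forall l t, (1 <= l <= L)%nat -> 0 < x t ->
     X * (u1 l + w1 l * Y) = z1 l -> x t * (u1 l + w1 l * y t) <= z1 l) ->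
  (forall l t, (1 <= l <= L)%nat -> 0 < x t ->
     Y * (v2 l + w2 l * X) = z2 l -> y t * (v2 l + w2 l * x t) <= z2 l) ->
  locally 0 (fun t => region (x t) (y t)).
Proof.
  intros Hx Hy <- <- HX HY [_ [_ Hreg]] Htight1 Htight2.
  assert (Hprod : forall (f g : R -> R) a b, continuity_pt f 0 -> continuity_pt g 0 ->
            continuity_pt (fun t => f t * (a + b * g t)) 0).
  { intros f g a b Hf Hg; apply continuity_pt_mult; [auto|].
    apply continuity_pt_plus; [apply continuity_pt_const; intros ? ?; reflexivity|].
    apply continuity_pt_mult; [apply continuity_pt_const; intros ? ?; reflexivity | auto]. }
  apply (filter_imp (fun t => 0 < x t /\ 0 < y t /\ forall l, (1 <= l <= L)%nat ->
    (x 0 * (u1 l + w1 l * y 0) < z1 l -> x t * (u1 l + w1 l * y t) <= z1 l) /\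
    (y 0 * (v2 l + w2 l * x 0) < z2 l -> y t * (v2 l + w2 l * x t) <= z2 l))).
  - intros t [Hxt [Hyt Hstrict]]; split; [lra | split; [lra|]]; intros l Hl.
    destruct (Hreg l Hl) as [C1 C2], (Hstrict l Hl) as [S1 S2].
    split; [destruct (Rle_lt_or_eq_dec _ _ C1) | destruct (Rle_lt_or_eq_dec _ _ C2)]; auto.
  - repeat apply filter_and; [apply locally_pos; auto | apply locally_pos; auto |].
    apply locally_forall_hops; intros l _.
    apply filter_and; apply (locally_le_of_lt (fun t => _ t * (_ + _ * _ t))); auto.
Qed.

Lemma maximizer_has_tight X Y : region_maximizer X Y -> 0 < X -> 0 < Y ->
  exists i l, (1 <= l <= L)%nat /\ tight i l X Y.
Proof.
  intros [Hreg Hmax] HX HY.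
  apply NNPP; intros Hno.
  assert (Hx : continuity_pt (fun _ => X) 0) by reg.
  assert (Hy : continuity_pt (fun t => Y + t) 0) by reg.
  destruct (locally_0_pair _ 1 Rlt_0_1
    (region_along_curve X Y _ _ Hx Hy eq_refl (Rplus_0_r Y) HX HY Hreg
       ltac:(intros l t Hl _ E; exfalso; apply Hno; exists 1%nat, l; split; [auto | left; auto])
       ltac:(intros l t Hl _ E; exfalso; apply Hno; exists 2%nat, l; split; [auto | right; auto])))
    as [t [Ht [Hreg_t _]]].
  specialize (Hmax _ _ Hreg_t); unfold gain in Hmax; nra.
Qed.

Lemma maximizer_second_tight X Y l0 : region_maximizer X Y -> 0 < X -> 0 < Y ->
  (1 <= l0 <= L)%nat -> X * (u1 l0 + w1 l0 * Y) = z1 l0 ->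
  exists i l, (1 <= l <= L)%nat /\ (i, l) <> (1%nat, l0) /\ tight i l X Y.
Proof.
  intros [Hreg Hmax] HX HY Hl0 Ht0.
  apply NNPP; intros Hno.
  destruct (coeffs_pos l0 Hl0) as (_ & Hw & Hz & _).
  set (c := (u1 l0 + w1 l0 * Y) / w1 l0).
  assert (Hc : 0 < c) by (apply Rdiv_lt_0_compat; nra).
  (* the curve is the hyperbola X (u + w Y) = z of constraint (1, l0) *)
  assert (Hx : continuity_pt (fun t => X + t) 0) by reg.
  assert (Hy : continuity_pt (fun t => Y - c * t / (X + t)) 0) by (reg; lra).
  assert (Hy0 : Y - c * 0 / (X + 0) = Y) by (field; lra).
  assert (Htight1 : forall l t, (1 <= l <= L)%nat -> 0 < X + t -> X * (u1 l + w1 l * Y) = z1 l ->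
            (X + t) * (u1 l + w1 l * (Y - c * t / (X + t))) <= z1 l).
  { intros l t Hl Hxt E; destruct (Nat.eq_dec l l0) as [-> | Hne].
    - replace ((X + t) * (u1 l0 + w1 l0 * (Y - c * t / (X + t)))) with (X * (u1 l0 + w1 l0 * Y))
        by (unfold c; field; lra).
      lra.
    - exfalso; apply Hno; exists 1%nat, l; repeat split; [lia | lia | congruence | left; auto]. }
  assert (Htight2 : forall l t, (1 <= l <= L)%nat -> 0 < X + t -> Y * (v2 l + w2 l * X) = z2 l ->
            (Y - c * t / (X + t)) * (v2 l + w2 l * (X + t)) <= z2 l).
  { intros l t Hl _ E; exfalso; apply Hno.
    exists 2%nat, l; repeat split; [lia | lia | congruence | right; auto]. }
  destruct (locally_0_pair _ X HX
    (region_along_curve X Y _ _ Hx Hy (Rplus_0_r X) Hy0 HX HY Hreg Htight1 Htight2))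
    as [t [Ht [Hp Hm]]].
  pose proof (Hmax _ _ Hp); pose proof (Hmax _ _ Hm).
  pose proof (gain_hyperbola_convex X Y c t Hc Ht).
  lra.
Qed.

Hypothesis HL : (1 <= L)%nat.

Let Xmax := min_hops (fun l => z1 l / u1 l) L.
Let Ymax := min_hops (fun l => z2 l / v2 l) L.
(* Below [Xslack] every user-1 constraint holds for all [Y <= Ymax]; dividing by
   [Rmax X Xslack] instead of [X] keeps [Ycap], the largest admissible [Y] at [X],
   continuous at [X = 0]. *)
Let Xslack := min_hops (fun l => z1 l / (u1 l + w1 l * Ymax)) L.
Let Ycap X :=
  min_hops (fun l =>
    Rmin (z2 l / (v2 l + w2 l * X)) ((z1 l - u1 l * X) / (w1 l * Rmax X Xslack))) L.

Lemma region_bounds X Y : region X Y -> X <= Xmax /\ Y <= Ymax.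
Proof.
  intros [HX [HY HXY]]; split; apply min_hops_glb; auto; intros l Hl;
    destruct (coeffs_pos l Hl) as (? & ? & ? & ? & ? & ?), (HXY l Hl);
    apply Rle_div_r; auto.
  - assert (0 <= X * (w1 l * Y)) by (apply Rmult_le_pos; nra). nra.
  - assert (0 <= Y * (w2 l * X)) by (apply Rmult_le_pos; nra). nra.
Qed.

Lemma Ymax_pos : 0 < Ymax.
Proof.
  apply min_hops_pos; auto; intros l Hl.
  destruct (coeffs_pos l Hl) as (? & ? & ? & ? & ? & ?); apply Rdiv_lt_0_compat; auto.
Qed.

Lemma Xslack_pos : 0 < Xslack.
Proof.
  pose proof Ymax_pos; apply min_hops_pos; auto; intros l Hl.
  destruct (coeffs_pos l Hl) as (? & ? & ? & ? & ? & ?); apply Rdiv_lt_0_compat; nra.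
Qed.

Lemma Xslack_cap l : (1 <= l <= L)%nat -> Xslack * (u1 l + w1 l * Ymax) <= z1 l.
Proof.
  intros Hl; destruct (coeffs_pos l Hl) as (? & ? & ? & ? & ? & ?); pose proof Ymax_pos.
  apply Rle_div_r; [nra | apply (min_hops_le (fun l => z1 l / (u1 l + w1 l * Ymax))); auto].
Qed.

Lemma region_iff_le_Ycap X Y : 0 <= X -> 0 <= Y <= Ymax -> region X Y <-> Y <= Ycap X.
Proof.
  intros HX HY.
  assert (Hhop : forall l, (1 <= l <= L)%nat ->
    (X * (u1 l + w1 l * Y) <= z1 l /\ Y * (v2 l + w2 l * X) <= z2 l) <->
    Y <= Rmin (z2 l / (v2 l + w2 l * X)) ((z1 l - u1 l * X) / (w1 l * Rmax X Xslack))).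
  { intros l Hl; destruct (coeffs_pos l Hl) as (? & ? & ? & ? & ? & ?).
    rewrite (le_capped_ratio_iff _ _ _ Ymax Xslack) by (auto using Xslack_pos, Xslack_cap).
    rewrite (Rle_div_r Y (z2 l) (v2 l + w2 l * X)) by nra.
    pose proof (Rmin_l (z2 l / (v2 l + w2 l * X)) ((z1 l - u1 l * X) / (w1 l * Rmax X Xslack))).
    pose proof (Rmin_r (z2 l / (v2 l + w2 l * X)) ((z1 l - u1 l * X) / (w1 l * Rmax X Xslack))).
    split; [intros [? ?]; apply Rmin_glb | intros; split]; lra. }
  split.
  - intros [_ [_ HXY]]; apply min_hops_glb; auto; intros l Hl; apply Hhop; auto.
  - intros HYc; split; [auto | split; [lra|]]; intros l Hl; apply Hhop; auto.
    eapply Rle_trans; [apply HYc | apply (min_hops_le (fun l => Rmin _ _)); auto].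
Qed.

Lemma Ycap_bounds X : 0 <= X <= Xmax -> 0 <= Ycap X <= Ymax.
Proof.
  intros HX; split.
  - apply min_hops_glb; auto; intros l Hl; destruct (coeffs_pos l Hl) as (? & ? & ? & ? & ? & ?).
    assert (X * u1 l <= z1 l).
    { apply Rle_div_r; [auto|].
      eapply Rle_trans; [apply HX | apply (min_hops_le (fun l => z1 l / u1 l)); auto]. }
    pose proof Xslack_pos; pose proof (Rmax_r X Xslack).
    apply Rmin_glb; apply Rdiv_le_0_compat; nra.
  - apply min_hops_glb; auto; intros l Hl; destruct (coeffs_pos l Hl) as (? & ? & ? & ? & ? & ?).
    eapply Rle_trans; [apply (min_hops_le (fun l => Rmin _ _)); eauto|].
    eapply Rle_trans; [apply Rmin_l|].
    unfold Rdiv; apply Rmult_le_compat_l; [lra | apply Rinv_le_contravar; nra].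
Qed.

Lemma Ycap_continuous X : 0 <= X -> continuity_pt Ycap X.
Proof.
  intros HX; apply continuity_pt_min_hops; auto; intros l Hl.
  destruct (coeffs_pos l Hl) as (? & ? & ? & ? & ? & ?).
  pose proof Xslack_pos; pose proof (Rmax_r X Xslack).
  apply continuity_pt_Rmin; [reg; nra|].
  apply continuity_pt_div; [reg | | nra].
  apply continuity_pt_mult; [reg|].
  apply continuity_pt_Rmax; [apply continuity_pt_id | reg].
Qed.

Theorem region_has_maximizer : exists X Y, region_maximizer X Y.
Proof.
  assert (HXmax : 0 <= Xmax) by (apply min_hops_glb; auto; intros l Hl;
    destruct (coeffs_pos l Hl) as (? & ? & ? & ? & ? & ?); apply Rdiv_le_0_compat; lra).
  assert (Hcont : forall X, 0 <= X <= Xmax -> continuity_pt (fun X => gain X (Ycap X)) X).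
  { intros X HX; unfold gain; apply continuity_pt_mult; [reg|].
    apply continuity_pt_plus; [reg | apply Ycap_continuous; lra]. }
  destruct (continuity_ab_maj _ 0 Xmax HXmax Hcont) as [M [HM HMrange]].
  assert (Hreg : forall X, 0 <= X <= Xmax -> region X (Ycap X)).
  { intros X HX; apply region_iff_le_Ycap; [lra | apply Ycap_bounds; auto | lra]. }
  exists M, (Ycap M); split; [auto|].
  intros X Y HXY.
  destruct (region_bounds X Y HXY) as [HX HY].
  pose proof HXY as [HX0 [HY0 _]].
  assert (Y <= Ycap X) by (apply region_iff_le_Ycap; auto).
  apply Rle_trans with (gain X (Ycap X)); [unfold gain; nra | apply HM; lra].
Qed.

End Region.

Lemma region_swap L u1 w1 z1 v2 w2 z2 X Y :
  region L u1 w1 z1 v2 w2 z2 X Y -> region L v2 w2 z2 u1 w1 z1 Y X.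
Proof.
  intros [HX [HY H]]; split; [auto | split; [auto|]]; intros l Hl; destruct (H l Hl); auto.
Qed.

Lemma maximizer_swap L u1 w1 z1 v2 w2 z2 X Y :
  region_maximizer L u1 w1 z1 v2 w2 z2 X Y -> region_maximizer L v2 w2 z2 u1 w1 z1 Y X.
Proof.
  intros [HXY Hmax]; split; [apply region_swap; auto|].
  intros X' Y' H'; specialize (Hmax _ _ (region_swap _ _ _ _ _ _ _ _ _ H')).
  unfold gain in *; lra.
Qed.

Theorem maximizer_tight_pair L u1 w1 z1 v2 w2 z2 X Y :
  (forall l, (1 <= l <= L)%nat ->
     0 < u1 l /\ 0 < w1 l /\ 0 < z1 l /\ 0 < v2 l /\ 0 < w2 l /\ 0 < z2 l) ->
  region_maximizer L u1 w1 z1 v2 w2 z2 X Y ->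
  X = 0 \/ Y = 0 \/
  exists i1 l1 i2 l2, (1 <= l1 <= L)%nat /\ (1 <= l2 <= L)%nat /\ (i1, l1) <> (i2, l2) /\
    tight u1 w1 z1 v2 w2 z2 i1 l1 X Y /\ tight u1 w1 z1 v2 w2 z2 i2 l2 X Y.
Proof.
  intros Hpos Hmax.
  destruct (Req_dec X 0) as [| HX0]; [now left|].
  destruct (Req_dec Y 0) as [| HY0]; [now right; left|].
  right; right.
  pose proof Hmax as [[HX [HY _]] _].
  assert (HX' : 0 < X) by lra; assert (HY' : 0 < Y) by lra.
  assert (Hpos' : forall l, (1 <= l <= L)%nat ->
     0 < v2 l /\ 0 < w2 l /\ 0 < z2 l /\ 0 < u1 l /\ 0 < w1 l /\ 0 < z1 l)
    by (intros l Hl; destruct (Hpos l Hl) as (? & ? & ? & ? & ? & ?); repeat split; auto).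
  destruct (maximizer_has_tight _ _ _ _ _ _ _ _ _ Hmax HX' HY') as [i [l [Hl [[-> T] | [-> T]]]]].
  - destruct (maximizer_second_tight _ _ _ _ _ _ _ Hpos _ _ _ Hmax HX' HY' Hl T)
      as [i' [l' [Hl' [Hne T']]]].
    exists 1%nat, l, i', l'; do 2 (split; [auto|]); split; [congruence|]; split; [left|]; auto.
  - destruct (maximizer_second_tight _ _ _ _ _ _ _ Hpos' _ _ _
                (maximizer_swap _ _ _ _ _ _ _ _ _ Hmax) HY' HX' Hl T)
      as [i' [l' [Hl' [Hne [[-> T'] | [-> T']]]]]].
    + exists 2%nat, l, 2%nat, l'; do 2 (split; [auto|]); split; [congruence|]; split; right; auto.
    + exists 2%nat, l, 1%nat, l'.
      do 2 (split; [auto|]); split; [congruence|]; split; [right | left]; auto.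
Qed.

Lemma user1 : is_user 1.
Proof. left; reflexivity. Qed.

Lemma user2 : is_user 2.
Proof. right; reflexivity. Qed.

Lemma other_user i : is_user i -> is_user (other i).
Proof. intros [-> | ->]; [right | left]; reflexivity. Qed.

Local Hint Resolve user1 user2 : core.

Section Network.
Variables (L : nat) (Pmax sigma2 : R) (g : nat -> nat -> nat -> R).
Hypotheses (HL : (2 <= L)%nat) (HP : 0 < Pmax) (Hs : 0 < sigma2)
  (Hg : forall j i l, is_user j -> is_user i -> (1 <= l <= L)%nat -> 0 < g j i l).

(* Coefficients of user [i]'s constraint [hop_admissible] at hop [l],
   read as X_i (u + w X_j) <= z. *)
Definition noise_coeff (i l : nat) : R := sigma2 * g (other i) (other i) l.
Definition coupling_coeff (i l : nat) : R :=
  sigma2 * g (other i) i l + Pmax * g i (other i) l * g (other i) i l.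
Definition power_coeff (i l : nat) : R := Pmax * g i i l * g (other i) (other i) l.

Lemma gains_pos l : (1 <= l <= L)%nat ->
  0 < g 1 1 l /\ 0 < g 1 2 l /\ 0 < g 2 1 l /\ 0 < g 2 2 l.
Proof. intros Hl; repeat split; apply Hg; auto. Qed.

Definition sinr_region : R -> R -> Prop :=
  region L (noise_coeff 1) (coupling_coeff 1) (power_coeff 1)
    (noise_coeff 2) (coupling_coeff 2) (power_coeff 2).

Definition sinr_maximizer : R -> R -> Prop :=
  region_maximizer L (noise_coeff 1) (coupling_coeff 1) (power_coeff 1)
    (noise_coeff 2) (coupling_coeff 2) (power_coeff 2).

Definition sinr_tight : nat -> nat -> R -> R -> Prop :=
  tight (noise_coeff 1) (coupling_coeff 1) (power_coeff 1)
    (noise_coeff 2) (coupling_coeff 2) (power_coeff 2).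

Lemma network_coeffs_pos l : (1 <= l <= L)%nat ->
  0 < noise_coeff 1 l /\ 0 < coupling_coeff 1 l /\ 0 < power_coeff 1 l /\
  0 < noise_coeff 2 l /\ 0 < coupling_coeff 2 l /\ 0 < power_coeff 2 l.
Proof.
  intros Hl; destruct (gains_pos l Hl) as (? & ? & ? & ?).
  unfold noise_coeff, coupling_coeff, power_coeff; simpl.
  repeat split; repeat (apply Rplus_lt_0_compat || apply Rmult_lt_0_compat); auto.
Qed.

Lemma sinr_nonneg p i l : feasible L Pmax p -> is_user i -> (1 <= l <= L)%nat ->
  0 <= sinr g sigma2 p i l.
Proof.
  intros Hp Hi Hl.
  pose proof (other_user i Hi) as Hj.
  destruct (Hp i (l - 1)%nat Hi ltac:(lia)), (Hp (other i) (l - 1)%nat Hj ltac:(lia)).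
  pose proof (Hg i i l Hi Hi Hl); pose proof (Hg (other i) i l Hj Hi Hl).
  unfold sinr; apply Rdiv_le_0_compat; nra.
Qed.

Lemma feasible_sinr_region p : feasible L Pmax p ->
  sinr_region (min_hops (sinr g sigma2 p 1) L) (min_hops (sinr g sigma2 p 2) L).
Proof.
  intros Hp.
  assert (Hmin_nonneg : forall i, is_user i -> 0 <= min_hops (sinr g sigma2 p i) L)
    by (intros i Hi; apply min_hops_glb; [lia|]; intros; apply sinr_nonneg; auto).
  split; [auto | split; [auto|]]; intros l Hl.
  assert (Hmin_le : forall i, is_user i ->
    min_hops (sinr g sigma2 p i) L * (sigma2 + p (other i) (l - 1)%nat * g (other i) i l)
      <= p i (l - 1)%nat * g i i l).
  { intros i Hi; pose proof (other_user i Hi) as Hj.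
    destruct (Hp (other i) (l - 1)%nat Hj ltac:(lia)).
    pose proof (Hg (other i) i l Hj Hi Hl).
    apply Rle_div_r; [nra | apply (min_hops_le (sinr g sigma2 p i)); auto]. }
  destruct (gains_pos l Hl) as (? & ? & ? & ?).
  destruct (Hp 1%nat (l - 1)%nat user1 ltac:(lia)), (Hp 2%nat (l - 1)%nat user2 ltac:(lia)).
  split.
  - apply hop_admissible_of_sinr with (p 1%nat (l - 1)%nat) (p 2%nat (l - 1)%nat); auto.
  - apply hop_admissible_of_sinr with (p 2%nat (l - 1)%nat) (p 1%nat (l - 1)%nat); auto.
Qed.

Definition target (X Y : R) (i : nat) : R := if Nat.eqb i 1 then X else Y.

(* Node [r_{i,k}] transmits in hop [k + 1]. *)
Definition matched_allocation (X Y : R) (i k : nat) : R :=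
  matched_power (g i i (S k)) (g i (other i) (S k)) (g (other i) i (S k))
    (g (other i) (other i) (S k)) sigma2 (target X Y i) (target X Y (other i)).

Lemma matched_allocation_feasible X Y : sinr_region X Y -> feasible L Pmax (matched_allocation X Y).
Proof.
  intros [HX [HY HXY]] i k Hi Hk.
  assert (Hl : (1 <= S k <= L)%nat) by lia.
  destruct (gains_pos _ Hl) as (? & ? & ? & ?).
  destruct (HXY _ Hl); destruct Hi as [-> | ->]; apply matched_power_range; auto.
Qed.

Lemma sinr_matched_allocation X Y i l : sinr_region X Y -> is_user i -> (1 <= l <= L)%nat ->
  sinr g sigma2 (matched_allocation X Y) i l = target X Y i.
Proof.
  intros [HX [HY HXY]] Hi Hl.
  destruct (gains_pos _ Hl) as (? & ? & ? & ?).
  destruct (HXY _ Hl); destruct l as [|k]; [lia|].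
  unfold sinr; replace (S k - 1)%nat with k by lia.
  destruct Hi as [-> | ->]; cbv [matched_allocation target other Nat.eqb];
    apply matched_power_sinr with (P := Pmax); auto.
Qed.

Lemma matched_allocation_tight X Y i l : sinr_region X Y -> (1 <= l <= L)%nat ->
  sinr_tight i l X Y -> matched_allocation X Y i (l - 1) = Pmax.
Proof.
  intros [HX [HY HXY]] Hl Htight.
  destruct (gains_pos _ Hl) as (? & ? & ? & ?).
  destruct (HXY _ Hl); destruct l as [|k]; [lia|]; replace (S k - 1)%nat with k by lia.
  destruct Htight as [[-> T] | [-> T]]; cbv [matched_allocation target other Nat.eqb];
    apply matched_power_tight; auto.
Qed.

Lemma matched_allocation_zero X Y i k : target X Y i = 0 -> matched_allocation X Y i k = 0.
Proof. intros H0; unfold matched_allocation; rewrite H0; apply matched_power_zero. Qed.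

Lemma matched_allocation_optimal X Y : sinr_maximizer X Y -> forall p, feasible L Pmax p ->
  sum_rate L g sigma2 p <= sum_rate L g sigma2 (matched_allocation X Y).
Proof.
  intros [Hreg Hmax] p Hp.
  pose proof (feasible_sinr_region p Hp) as Hreg_p.
  pose proof Hreg as [HX [HY _]]; pose proof Hreg_p as [HXp [HYp _]].
  unfold sum_rate.
  rewrite (min_hops_const (sinr g sigma2 (matched_allocation X Y) 1) L X),
    (min_hops_const (sinr g sigma2 (matched_allocation X Y) 2) L Y)
    by (lia || intros l Hl; apply (sinr_matched_allocation X Y); auto).
  apply log2_sum_le; auto.
Qed.

Lemma matched_allocation_binary X Y : sinr_maximizer X Y ->
  exists i1 k1 i2 k2,
    is_user i1 /\ (k1 < L)%nat /\ is_user i2 /\ (k2 < L)%nat /\ (i1 <> i2 \/ k1 <> k2) /\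
    (matched_allocation X Y i1 k1 = 0 \/ matched_allocation X Y i1 k1 = Pmax) /\
    (matched_allocation X Y i2 k2 = 0 \/ matched_allocation X Y i2 k2 = Pmax).
Proof.
  intros Hmax; pose proof Hmax as [Hreg _].
  destruct (maximizer_tight_pair _ _ _ _ _ _ _ _ _ network_coeffs_pos Hmax)
    as [HX0 | [HY0 | (i1 & l1 & i2 & l2 & Hl1 & Hl2 & Hne & T1 & T2)]].
  - exists 1%nat, 0%nat, 1%nat, 1%nat.
    do 5 (split; [auto; lia|]); split; left; apply matched_allocation_zero; auto.
  - exists 2%nat, 0%nat, 2%nat, 1%nat.
    do 5 (split; [auto; lia|]); split; left; apply matched_allocation_zero; auto.
  - assert (Huser : forall i l, sinr_tight i l X Y -> is_user i)
      by (intros i l [[-> _] | [-> _]]; auto).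
    exists i1, (l1 - 1)%nat, i2, (l2 - 1)%nat.
    do 4 (split; [eauto; lia|]); split.
    + destruct (Nat.eq_dec i1 i2) as [-> | Hi]; [|left; auto].
      right; intros E; apply Hne; f_equal; lia.
    + split; right; eapply matched_allocation_tight; eauto.
Qed.

End Network.

Theorem theorem1 (L : nat) (Pmax sigma2 : R) (g : nat -> nat -> nat -> R)
  (HL : (2 <= L)%nat) (HP : 0 < Pmax) (Hs : 0 < sigma2)
  (Hg : forall j i l, is_user j -> is_user i -> (1 <= l <= L)%nat -> 0 < g j i l) :
  exists pstar : nat -> nat -> R,
    feasible L Pmax pstar /\
    (forall p, feasible L Pmax p -> sum_rate L g sigma2 p <= sum_rate L g sigma2 pstar) /\
    (exists i1 k1 i2 k2,
        is_user i1 /\ (k1 < L)%nat /\ is_user i2 /\ (k2 < L)%nat /\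
        (i1 <> i2 \/ k1 <> k2) /\
        (pstar i1 k1 = 0 \/ pstar i1 k1 = Pmax) /\
        (pstar i2 k2 = 0 \/ pstar i2 k2 = Pmax)) /\
    (forall i l, is_user i -> (2 <= l <= L)%nat ->
        sinr g sigma2 pstar i 1 = sinr g sigma2 pstar i l).
Proof.
  destruct (region_has_maximizer _ _ _ _ _ _ _ (network_coeffs_pos L Pmax sigma2 g HP Hs Hg)
              ltac:(lia)) as [X [Y Hmax]].
  pose proof Hmax as [Hreg _].
  exists (matched_allocation sigma2 g X Y); split; [|split; [|split]].
  - apply (matched_allocation_feasible L Pmax sigma2 g); auto.
  - apply (matched_allocation_optimal L Pmax sigma2 g); auto.
  - apply (matched_allocation_binary L Pmax sigma2 g); auto.
  - intros i l Hi Hl; rewrite !(sinr_matched_allocation L Pmax sigma2 g HL HP Hs Hg X Y); auto; lia.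
Qed.
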